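(* Let $B$ be an $n\times n$ matrix all of whose entries are $-1$ or $+1$, and suppose all eigenvalues of $B$ are real and positive. Then $n=1$ and $B=[1]$.
   Context: Eigenvalues are taken over $\mathbb{C}$. *)

From HB Require Import structures.
From mathcomp Require Import all_boot all_order all_algebra all_field.
Set Implicit Arguments. Unset Strict Implicit. Unset Printing Implicit Defensive.

From HB Require Import structures.
From mathcomp Require Import all_boot all_order all_algebra all_field.

Set Implicit Arguments.
Unset Strict Implicit.
Unset Printing Implicit Defensive.
Import Order.TTheory GRing.Theory Num.Theory.
Local Open Scope ring_scope.

(* If all eigenvalues of B are positive, then det B > 0 and, by AM-GM on the
   eigenvalues, det B <= (tr B / n)^n <= 1, since every diagonal entry is at
   most 1.  But det B is an integer, so det B = 1; for n >= 2 this is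
   impossible, because modulo 2 all rows of B coincide and det B is even. *)

Definition pm1_mx (R : pzRingType) m n (A : 'M[R]_(m, n)) : Prop :=
  forall i j, A i j = 1 \/ A i j = -1.

Lemma pm1_mx_det_even n (A : 'M[int]_n.+2) : pm1_mx A -> (2 %| \det A)%Z.
Proof.
move=> pmA; have pchar2 := pchar_Fp (isT : prime 2).
rewrite (dvdz_pcharf pchar2) -det_map_mx.
apply/eqP/(determinant_alternate (i1 := 0) (i2 := 1)) => // j.
rewrite !mxE; case: (pmA 0 j) => ->; case: (pmA 1 j) => ->.
all: by rewrite ?rmorphN ?(oppr_pchar2 pchar2).
Qed.

Lemma pm1_mx_intr (R : pzRingType) m n (B : 'M[R]_(m, n)) :
  pm1_mx B -> exists2 A : 'M[int]_(m, n), pm1_mx A & B = map_mx intr A.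
Proof.
move=> pmB; exists (\matrix_(i, j) (if B i j == 1 then 1 else -1)).
  by move=> i j; rewrite mxE; case: ifP; [left | right].
apply/matrixP => i j; rewrite !mxE.
case: eqP => [-> | ne1]; first by rewrite rmorph1.
by case: (pmB i j) => [/ne1 | ->] //; rewrite rmorphN1.
Qed.

Lemma pm1_mx_det_even_int (R : comPzRingType) n (B : 'M[R]_n.+2) :
  pm1_mx B -> exists2 d : int, \det B = d%:~R & (2 %| d)%Z.
Proof.
case/pm1_mx_intr => A pmA ->.
by exists (\det A); [rewrite det_map_mx | apply: pm1_mx_det_even].
Qed.

Lemma pm1_mx_trace_le (R : numDomainType) n (B : 'M[R]_n) :
  pm1_mx B -> \tr B <= n%:R.
Proof.
move=> pmB; rewrite /mxtrace -[n in n%:R]card_ord -sumr_const.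
apply: ler_sum => i _; case: (pmB i i) => -> //.
by rewrite (le_trans (lerN10 _)).
Qed.

Section EigenvalueBounds.

Variables (R : numClosedFieldType) (n : nat) (A : 'M[R]_n).

Lemma char_poly_split :
  {r : seq R | size r = n & char_poly A = \prod_(z <- r) ('X - z%:P)}.
Proof.
have [r defA] := closed_field_poly_normal (char_poly A).
rewrite (monicP (char_poly_monic A)) scale1r in defA.
exists r => //; apply/succn_inj.
by rewrite -(size_prod_XsubC r id) -defA size_char_poly.
Qed.

Let r := s2val char_poly_split.
Let size_r : size r = n := s2valP char_poly_split.
Let char_poly_r : char_poly A = \prod_(z <- r) ('X - z%:P) :=
  s2valP' char_poly_split.

Let mem_r_eigenvalue z : z \in r -> eigenvalue A z.
Proof. by move=> rz; rewrite eigenvalue_root_char char_poly_r root_prod_XsubC. Qed.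

Let det_r : \det A = \prod_(z <- r) z.
Proof.
have := char_poly_det A; rewrite char_poly_r coef0_prod_XsubC size_r.
by move/(congr1 ( *%R ((-1) ^+ n))); rewrite !signrMK.
Qed.

Let trace_r : \tr A = \sum_(z <- r) z.
Proof.
have [n0 | n_gt0] := posnP n.
  rewrite (size0nil (etrans size_r n0)) big_nil /mxtrace big1 // => i _.
  by have := leq_trans (ltn_ord i) (eq_leq n0).
have := char_poly_trace A n_gt0.
rewrite char_poly_r -[in n.-1]size_r coefPn_prod_XsubC ?size_r -?lt0n //.
by move/oppr_inj.
Qed.

Lemma det_gt0_eigenvalues_gt0 :
  (forall a, eigenvalue A a -> 0 < a) -> 0 < \det A.
Proof.
by move=> posA; rewrite det_r big_seq; apply: prodr_gt0 => z /mem_r_eigenvalue/posA.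
Qed.

Lemma mxtrace_ge0_eigenvalues_ge0 :
  (forall a, eigenvalue A a -> 0 <= a) -> 0 <= \tr A.
Proof.
by move=> nnegA; rewrite trace_r big_seq; apply: sumr_ge0 => z /mem_r_eigenvalue/nnegA.
Qed.

Lemma det_le_trace_AGM :
  (forall a, eigenvalue A a -> 0 <= a) -> \det A <= (\tr A / n%:R) ^+ n.
Proof.
move=> nnegA; rewrite det_r trace_r -size_r.
rewrite (big_nth 0) [\sum_(z <- r) z](big_nth 0) !big_mkord.
have := leif_AGM (A := predT) (E := fun i : 'I_(size r) => r`_i).
rewrite /= card_ord => AGM; apply: (leif_le (AGM _)) => i _.
exact/nnegA/mem_r_eigenvalue/mem_nth.
Qed.

End EigenvalueBounds.

Lemma pm1_mx_det_le1 (R : numClosedFieldType) n (B : 'M[R]_n) :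
  pm1_mx B -> (forall a, eigenvalue B a -> 0 <= a) -> \det B <= 1.
Proof.
move=> pmB nnegB; apply: (le_trans (det_le_trace_AGM nnegB)).
have [n0 | n_gt0] := posnP n; first by rewrite [in X in _ ^+ X]n0 expr0.
have n_pos : 0 < n%:R :> R by rewrite ltr0n.
apply: exprn_ile1; first by rewrite divr_ge0 ?mxtrace_ge0_eigenvalues_ge0 ?ltW.
by rewrite ler_pdivrMr // mul1r pm1_mx_trace_le.
Qed.

Theorem mainTheorem6 (n : nat) (B : 'M[algC]_n) :
  (0 < n)%N ->
  (forall i j, B i j = 1 \/ B i j = -1) ->
  (forall a : algC, eigenvalue B a -> a \is Num.real /\ 0 < a) ->
  n = 1%N /\ (forall i j, B i j = 1).
Proof.
move=> n_gt0 pmB posB.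
have det_gt0 : 0 < \det B by apply: det_gt0_eigenvalues_gt0 => a /posB[].
have det_le1 : \det B <= 1 by apply: pm1_mx_det_le1 => // a /posB[_ /ltW].
case: n n_gt0 B pmB {posB} det_gt0 det_le1 => [// | [|n]] _ B pmB det_gt0 det_le1.
  split=> // i j; rewrite !ord1; move: det_gt0; rewrite det_mx11.
  by case: (pmB 0 0) => // ->; rewrite oppr_gt0 ltr10.
have [d det_d d_even] := pm1_mx_det_even_int pmB.
move: det_gt0 det_le1; rewrite det_d ltr0z lerz1 => d_gt0 d_le1.
suff d1 : d = 1 by rewrite d1 in d_even.
by apply/le_anti; rewrite d_le1 -gtz0_ge1.
Qed.
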